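(* A topological group $X$ is Choquet if and only if its Raikov completion $\bar X$ is Choquet and $X$ is $G_\delta$-dense in $\bar X$.
   Context: Topological groups are assumed Hausdorff; the Raikov completion $\bar X$ of $X$ is its completion with respect to the two-sided uniformity, a complete topological group containing $X$ as a dense subgroup. The Choquet game $\mathsf{G}_{EN}(X)$ on a topological space $X$ is played by players $\mathsf E$ and $\mathsf N$: $\mathsf E$ starts by choosing a non-empty open set $U_0\subset X$, $\mathsf N$ responds with a non-empty open $U_1\subset U_0$, and at the $n$-th inning $\mathsf E$ chooses a non-empty open $U_{2n}\subset U_{2n-1}$ and $\mathsf N$ responds with a non-empty open $U_{2n+1}\subset U_{2n}$. Player $\mathsf E$ wins if $\bigcap_{n\in\omega}U_n=\emptyset$; otherwise $\mathsf N$ wins. A topological space $X$ is Choquet if player $\mathsf N$ has a winning strategy in $\mathsf{G}_{EN}(X)$. A subset $A$ of a topological space $Y$ is $G_\delta$-dense in $Y$ if $A$ meets every non-empty $G_\delta$-subset of $Y$. *)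

From Stdlib Require Import List Arith Classical.

Set Implicit Arguments.

Definition set (T : Type) := T -> Prop.

Record Topology (T : Type) := {
  open : set T -> Prop;
  open_full : open (fun _ => True);
  open_inter : forall A B, open A -> open B -> open (fun x => A x /\ B x);
  open_union : forall F : set (set T),
      (forall A, F A -> open A) -> open (fun x => exists A, F A /\ A x)
}.

Arguments open {T} t A.

Definition hausdorff {T : Type} (t : Topology T) : Prop :=
  forall x y : T, x <> y ->
    exists U V, open t U /\ open t V /\ U x /\ V y /\ (forall z, U z -> V z -> False).

Record TopGroup := {
  tg_car :> Type;
  tg_mul : tg_car -> tg_car -> tg_car;
  tg_inv : tg_car -> tg_car;
  tg_one : tg_car;
  tg_assoc : forall x y z, tg_mul x (tg_mul y z) = tg_mul (tg_mul x y) z;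
  tg_mul1 : forall x, tg_mul tg_one x = x;
  tg_mulV : forall x, tg_mul (tg_inv x) x = tg_one;
  tg_top : Topology tg_car;
  tg_mul_cont : forall x y (W : set tg_car), open tg_top W -> W (tg_mul x y) ->
      exists U V, open tg_top U /\ open tg_top V /\ U x /\ V y /\
        (forall a b, U a -> V b -> W (tg_mul a b));
  tg_inv_cont : forall W, open tg_top W -> open tg_top (fun x => W (tg_inv x));
  tg_hausdorff : hausdorff tg_top
}.

Arguments tg_mul {t}.
Arguments tg_inv {t}.
Arguments tg_one {t}.

Definition is_filter {T : Type} (F : set (set T)) : Prop :=
  F (fun _ => True) /\
  ~ F (fun _ => False) /\
  (forall A B, F A -> (forall x, A x -> B x) -> F B) /\
  (forall A B, F A -> F B -> F (fun x => A x /\ B x)).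

Definition two_sided_cauchy {G : TopGroup} (F : set (set G)) : Prop :=
  forall U : set G, open (tg_top G) U -> U tg_one ->
    exists A, F A /\ forall x y, A x -> A y ->
      U (tg_mul (tg_inv x) y) /\ U (tg_mul y (tg_inv x)).

Definition filter_converges {G : TopGroup} (F : set (set G)) : Prop :=
  exists p : G, forall U, open (tg_top G) U -> U p -> F U.

(** Raikov complete = complete with respect to the two-sided uniformity. *)
Definition raikov_complete (G : TopGroup) : Prop :=
  forall F : set (set G), is_filter F -> two_sided_cauchy F -> filter_converges F.

(** The Raikov completion is unique up to isomorphism over X. *)
Definition is_raikov_completion (X Y : TopGroup) (j : X -> Y) : Prop :=
  (forall a b, j (tg_mul a b) = tg_mul (j a) (j b)) /\
  (forall a b, j a = j b -> a = b) /\
  (forall B, open (tg_top Y) B -> open (tg_top X) (fun x => B (j x))) /\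
  (forall A, open (tg_top X) A ->
      exists B, open (tg_top Y) B /\ forall x, A x <-> B (j x)) /\
  (forall B, open (tg_top Y) B -> (exists y, B y) -> exists x, B (j x)) /\
  raikov_complete Y.

(** A play is a sequence U : nat -> set T; moves with
    even index are E's, odd index are N's. *)
Definition legal_move {T : Type} (t : Topology T) (U : nat -> set T) (k : nat) : Prop :=
  open t (U k) /\ (exists x, U k x) /\
  (forall x, 0 < k -> U k x -> U (k - 1) x).

(** Strategies of player N: a function of the history U_0, ..., U_(2n). *)
Definition strategy (T : Type) := list (set T) -> set T.

Definition history {T : Type} (U : nat -> set T) (m : nat) : list (set T) :=
  map U (seq 0 m).

Definition follows_upto {T : Type} (s : strategy T) (U : nat -> set T) (m : nat) : Prop :=
  forall n, 2 * n + 1 < m -> U (2 * n + 1) = s (history U (2 * n + 1)).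

Definition winning_N {T : Type} (t : Topology T) (s : strategy T) : Prop :=
  (forall (U : nat -> set T) (n : nat),
      (forall k, k <= 2 * n -> legal_move t U k) ->
      follows_upto s U (2 * n + 1) ->
      let V := s (history U (2 * n + 1)) in
      open t V /\ (exists x, V x) /\ (forall x, V x -> U (2 * n) x)) /\
  (forall U : nat -> set T,
      (forall k, legal_move t U k) ->
      (forall n, U (2 * n + 1) = s (history U (2 * n + 1))) ->
      exists x, forall k, U k x).

Definition choquet {T : Type} (t : Topology T) : Prop :=
  exists s : strategy T, winning_N t s.

Definition Gdelta_dense {T : Type} (t : Topology T) (A : set T) : Prop :=
  forall V : nat -> set T, (forall n, open t (V n)) ->
    (exists y, forall n, V n y) -> exists y, A y /\ forall n, V n y.

From Stdlib Require Import List Arith Lia FunctionalExtensionality PropExtensionality ClassicalEpsilon.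
Import ListNotations.

(* Along a dense embedding j : X -> Y, an open set of Y corresponds to its trace
   on X, and an open set of X to the largest open set of Y with that trace.  This
   lets a winning strategy of N be simulated from one space in the other; the
   simulated play has a nonempty intersection in the original space, and the
   point found there gives a point of the new play: directly when going from X to
   Y, and by G_delta-density of j(X) when going from Y to X.  For G_delta-density,
   given y in a G_delta set ∩ V_n, N plays two games in X at once, steering them
   so that the points a, b in which they end satisfy
   j(ab) ∈ T_n T_n^-1 y T_n^-1 T_n ⊆ V_n for every n. *)

Notation "a ⋅ b" := (tg_mul a b) (at level 40, left associativity).
Notation "a ^-1" := (tg_inv a) (at level 3, left associativity, format "a ^-1").

Definition setT {T : Type} : set T := fun _ => True.

Lemma set_ext {T : Type} (A B : set T) : (forall x, A x <-> B x) -> A = B.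
Proof.
  intros H; apply functional_extensionality; intros x.
  apply propositional_extensionality; auto.
Qed.

Lemma open_ext {T : Type} (t : Topology T) (A B : set T) :
  (forall x, A x <-> B x) -> open t A -> open t B.
Proof. intros H; rewrite (set_ext A B H); auto. Qed.

Lemma open_local {T : Type} (t : Topology T) (A : set T) :
  (forall x, A x -> exists U, open t U /\ U x /\ forall z, U z -> A z) -> open t A.
Proof.
  intros H.
  apply open_ext with (fun x => exists U, (open t U /\ forall z, U z -> A z) /\ U x).
  - intros x; split.
    + intros [U [[_ HU] Ux]]; auto.
    + intros Ax; destruct (H x Ax) as [U [HU [Ux HUA]]]; exists U; auto.
  - apply open_union; intros U [HU _]; exact HU.
Qed.

Section GroupAlgebra.
Variable G : TopGroup.
Implicit Types a b c d u x z : G.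

Lemma mulgI a x z : a ⋅ x = a ⋅ z -> x = z.
Proof.
  intros H; rewrite <- (tg_mul1 G x), <- (tg_mul1 G z), <- (tg_mulV G a).
  rewrite <- !tg_assoc, H; reflexivity.
Qed.

Lemma mulgV x : x ⋅ x^-1 = tg_one.
Proof.
  set (e := x ⋅ x^-1).
  assert (He : e ⋅ e = e).
  { unfold e; rewrite <- tg_assoc, (tg_assoc G (x^-1)), tg_mulV, tg_mul1; reflexivity. }
  rewrite <- (tg_mul1 G e) at 1; rewrite <- (tg_mulV G e) at 1.
  rewrite <- tg_assoc, He; apply tg_mulV.
Qed.

Lemma mulg1 x : x ⋅ tg_one = x.
Proof. rewrite <- (tg_mulV G x), tg_assoc, mulgV, tg_mul1; reflexivity. Qed.

Lemma invgK x : x^-1^-1 = x.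
Proof. apply (mulgI (x^-1)); rewrite mulgV, tg_mulV; reflexivity. Qed.

Lemma invgM a b : (a ⋅ b)^-1 = b^-1 ⋅ a^-1.
Proof.
  apply (mulgI (a ⋅ b)); rewrite mulgV.
  rewrite <- tg_assoc, (tg_assoc G b), mulgV, tg_mul1, mulgV; reflexivity.
Qed.

Lemma invg1 : (tg_one : G)^-1 = tg_one.
Proof. rewrite <- (tg_mul1 G (tg_one^-1)); apply mulgV. Qed.

Lemma mulKg a z : a^-1 ⋅ (a ⋅ z) = z.
Proof. rewrite tg_assoc, tg_mulV, tg_mul1; reflexivity. Qed.

Lemma mulKVg a z : a ⋅ (a^-1 ⋅ z) = z.
Proof. rewrite tg_assoc, mulgV, tg_mul1; reflexivity. Qed.

Lemma mulgVinvK u a : u ⋅ (a^-1 ⋅ u)^-1 = a.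
Proof. rewrite invgM, invgK; apply mulKVg. Qed.

Lemma invmulgVK u a : (u ⋅ a^-1)^-1 ⋅ u = a.
Proof. rewrite invgM, invgK, <- tg_assoc, tg_mulV, mulg1; reflexivity. Qed.

Lemma sandwich_cancel a b c d u v :
  ((a ⋅ c^-1) ⋅ (u ⋅ c^-1)^-1 ⋅ v) ⋅ ((d^-1 ⋅ (u^-1 ⋅ v))^-1 ⋅ (d^-1 ⋅ b)) = a ⋅ b.
Proof.
  rewrite !invgM, !invgK, <- !tg_assoc.
  rewrite (mulKg c), (mulKVg v), (mulKg u), (mulKVg d); reflexivity.
Qed.

Lemma open_mulr (k : G) (W : set G) :
  open (tg_top G) W -> open (tg_top G) (fun u => W (u ⋅ k)).
Proof.
  intros HW; apply open_local; intros x Wx.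
  destruct (tg_mul_cont G x k W HW Wx) as [U [V [HU [_ [Ux [Vk HUV]]]]]].
  exists U; auto.
Qed.

Lemma open_mull (k : G) (W : set G) :
  open (tg_top G) W -> open (tg_top G) (fun u => W (k ⋅ u)).
Proof.
  intros HW; apply open_local; intros x Wx.
  destruct (tg_mul_cont G k x W HW Wx) as [U [V [_ [HV [Uk [Vx HUV]]]]]].
  exists V; auto.
Qed.

Lemma nbhd1_sandwich (y : G) (V : set G) :
  open (tg_top G) V -> V y ->
  exists T, open (tg_top G) T /\ T tg_one /\
    forall t1 t2 t3 t4, T t1 -> T t2 -> T t3 -> T t4 ->
      V ((t1 ⋅ t2^-1) ⋅ y ⋅ (t3^-1 ⋅ t4)).
Proof.
  intros HV Vy.
  assert (V1 : V ((tg_one ⋅ tg_one^-1) ⋅ y ⋅ (tg_one^-1 ⋅ tg_one))).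
  { rewrite invg1, !tg_mul1, mulg1; exact Vy. }
  destruct (tg_mul_cont G _ _ V HV V1) as [U1 [U2 [HU1 [HU2 [U1x [U2x H12]]]]]].
  destruct (tg_mul_cont G _ _ U1 HU1 U1x) as [U3 [U4 [HU3 [HU4 [U3x [U4x H34]]]]]].
  destruct (tg_mul_cont G _ _ U3 HU3 U3x) as [U5 [U6 [HU5 [HU6 [U5x [U6x H56]]]]]].
  destruct (tg_mul_cont G _ _ U2 HU2 U2x) as [U7 [U8 [HU7 [HU8 [U7x [U8x H78]]]]]].
  exists (fun t => (U5 t /\ U6 t^-1) /\ (U7 t^-1 /\ U8 t)); split; [|split].
  - repeat apply open_inter; auto using tg_inv_cont.
  - tauto.
  - intros t1 t2 t3 t4 H1 H2 H3 H4.
    apply H12; [apply H34; [apply H56|]|apply H78]; tauto.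
Qed.

End GroupAlgebra.

Section GrowingLists.
Variables (A : Type) (d : A) (h : nat -> list A).
Hypothesis h_grows : forall i, exists r, h (S i) = h i ++ r.
Hypothesis h_long : forall i, i <= length (h i).

Definition limit_seq (k : nat) : A := nth k (h (S k)) d.

Lemma grows_prefix n m : n <= m -> exists r, h m = h n ++ r.
Proof.
  induction 1 as [|m _ [r Hr]]; [exists []; rewrite app_nil_r; reflexivity|].
  destruct (h_grows m) as [r' Hr']; exists (r ++ r').
  rewrite Hr', Hr, app_assoc; reflexivity.
Qed.

Lemma nth_limit_seq n k : k < length (h n) -> nth k (h n) d = limit_seq k.
Proof.
  intros Hk; unfold limit_seq.
  destruct (grows_prefix n (max n (S k))) as [r1 H1]; [lia|].
  destruct (grows_prefix (S k) (max n (S k))) as [r2 H2]; [lia|].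
  rewrite <- (app_nth1 _ r1 d Hk), <- H1, H2, app_nth1; [reflexivity|].
  specialize (h_long (S k)); lia.
Qed.

Lemma map_limit_seq n m :
  m <= length (h n) -> map limit_seq (seq 0 m) = firstn m (h n).
Proof.
  intros Hm; apply nth_ext with d d.
  - rewrite length_map, length_seq, length_firstn; lia.
  - intros k Hk; rewrite length_map, length_seq in Hk.
    rewrite nth_firstn, (proj2 (Nat.ltb_lt k m) Hk), nth_limit_seq by lia.
    rewrite (nth_indep _ d (limit_seq 0)) by (rewrite length_map, length_seq; lia).
    rewrite map_nth, seq_nth by lia; reflexivity.
Qed.

End GrowingLists.

Arguments limit_seq {A} d h k.
Arguments nth_limit_seq {A d h} h_grows h_long n k.
Arguments map_limit_seq {A d h} h_grows h_long n m.

Lemma length_history {T : Type} (U : nat -> set T) m : length (history U m) = m.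
Proof. unfold history; rewrite length_map, length_seq; reflexivity. Qed.

Lemma nth_history {T : Type} (U : nat -> set T) m k d : k < m -> nth k (history U m) d = U k.
Proof.
  intros Hk; unfold history.
  rewrite (nth_indep _ d (U 0)), map_nth, seq_nth by (rewrite ?length_map, ?length_seq; lia).
  reflexivity.
Qed.

Lemma legal_reply {T : Type} {t : Topology T} {s : strategy T} {W : nat -> set T} {n : nat} :
  winning_N t s -> (forall k, k <= 2 * n -> legal_move t W k) ->
  follows_upto s W (2 * n + 2) -> legal_move t W (2 * n + 1).
Proof.
  intros [s_legal _] HW Hf.
  assert (Hf' : follows_upto s W (2 * n + 1)) by (intros m Hm; apply Hf; lia).
  destruct (s_legal W n HW Hf') as [Vo [Vne Vsub]].
  rewrite <- (Hf n) in Vo, Vne, Vsub by lia.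
  split; [exact Vo|split; [exact Vne|]].
  intros x _; replace (2 * n + 1 - 1) with (2 * n) by lia; apply Vsub.
Qed.

(* A winning strategy for N in Y is simulated in X: to each X-play U we attach a
   shadow Y-play W, where E's moves [W (2n+2) = phi (U (2n+2)) ∩ W (2n+1)] follow
   U and N's moves are given by s; N answers in X with [psi (W (2n+1)) ∩ U (2n)].
   In the applications phi and psi are the trace and the extension along a dense
   embedding, in one order or the other. *)
Section StrategyTransfer.
Variables (X Y : Type) (tX : Topology X) (tY : Topology Y).
Variables (phi : set X -> set Y) (psi : set Y -> set X) (s : strategy Y).

Fixpoint shadow_history (U : nat -> set X) (n : nat) : list (set Y) :=
  match n with
  | 0 => [phi (U 0)]
  | S n' => let h := shadow_history U n' in
            h ++ [s h; fun t => phi (U (2 * n' + 2)) t /\ s h t]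
  end.

Definition shadow (U : nat -> set X) : nat -> set Y :=
  limit_seq setT (shadow_history U).

Definition transferred_strategy : strategy X := fun h =>
  let U k := nth k h setT in
  let n := Nat.div2 (length h) in
  fun x => psi (s (shadow_history U n)) x /\ U (2 * n) x.

Lemma length_shadow_history U n : length (shadow_history U n) = 2 * n + 1.
Proof. induction n; simpl; [reflexivity|]; rewrite length_app, IHn; simpl; lia. Qed.

Lemma shadow_history_S U n :
  shadow_history U (S n) = shadow_history U n ++
    [s (shadow_history U n); fun t => phi (U (2 * n + 2)) t /\ s (shadow_history U n) t].
Proof. reflexivity. Qed.

Lemma shadow_history_grows U n : exists r, shadow_history U (S n) = shadow_history U n ++ r.
Proof. eexists; reflexivity. Qed.

Lemma shadow_history_long U n : n <= length (shadow_history U n).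
Proof. rewrite length_shadow_history; lia. Qed.

Lemma nth_shadow_history U n k :
  k < 2 * n + 1 -> nth k (shadow_history U n) setT = shadow U k.
Proof.
  intros Hk; apply (nth_limit_seq (shadow_history_grows U) (shadow_history_long U)).
  rewrite length_shadow_history; exact Hk.
Qed.

Lemma shadow_history_eq U n : shadow_history U n = history (shadow U) (2 * n + 1).
Proof.
  unfold history, shadow.
  rewrite (map_limit_seq (shadow_history_grows U) (shadow_history_long U) n)
    by (rewrite length_shadow_history; lia).
  symmetry; apply firstn_all2; rewrite length_shadow_history; lia.
Qed.

Lemma shadow_0 U : shadow U 0 = phi (U 0).
Proof. reflexivity. Qed.

Lemma shadow_odd U n : shadow U (2 * n + 1) = s (shadow_history U n).
Proof.
  rewrite <- (nth_shadow_history U (S n)), shadow_history_S by lia.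
  rewrite app_nth2; rewrite length_shadow_history; [|lia].
  replace (2 * n + 1 - (2 * n + 1)) with 0 by lia; reflexivity.
Qed.

Lemma shadow_even U n :
  shadow U (2 * n + 2) = fun t => phi (U (2 * n + 2)) t /\ shadow U (2 * n + 1) t.
Proof.
  rewrite shadow_odd, <- (nth_shadow_history U (S n)), shadow_history_S by lia.
  rewrite app_nth2; rewrite length_shadow_history; [|lia].
  replace (2 * n + 2 - (2 * n + 1)) with 1 by lia; reflexivity.
Qed.

Lemma shadow_follows U m : follows_upto s (shadow U) m.
Proof. intros n _; rewrite shadow_odd, shadow_history_eq; reflexivity. Qed.

Lemma shadow_history_ext U U' n :
  (forall k, k <= 2 * n -> U k = U' k) -> shadow_history U n = shadow_history U' n.
Proof.
  induction n as [|n IHn]; intros H.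
  - simpl; rewrite H by lia; reflexivity.
  - rewrite !shadow_history_S, IHn, (H (2 * n + 2)); [reflexivity|lia|].
    intros k Hk; apply H; lia.
Qed.

Lemma transferred_strategy_history U n x :
  transferred_strategy (history U (2 * n + 1)) x <->
  psi (shadow U (2 * n + 1)) x /\ U (2 * n) x.
Proof.
  unfold transferred_strategy; rewrite length_history.
  replace (2 * n + 1) with (S (2 * n)) by lia; rewrite Nat.div2_succ_double.
  replace (S (2 * n)) with (2 * n + 1) by lia.
  rewrite (shadow_history_ext _ U n).
  - rewrite shadow_odd, nth_history by lia; reflexivity.
  - intros k Hk; apply nth_history; lia.
Qed.

Hypothesis s_wins : winning_N tY s.
Hypothesis phi_open : forall A, open tX A -> open tY (phi A).
Hypothesis phi_nonempty : forall A, open tX A -> (exists x, A x) -> exists t, phi A t.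
Hypothesis phi_meets : forall A V, open tX A -> open tY V -> (exists x, A x) ->
  (forall x, A x -> psi V x) -> exists t, phi A t /\ V t.
Hypothesis psi_open_meets : forall A V, open tX A -> open tY V -> (exists t, V t) ->
  (forall t, V t -> phi A t) -> open tX (psi V) /\ exists x, psi V x /\ A x.
Hypothesis psi_Gdelta : forall W : nat -> set Y, (forall k, open tY (W k)) ->
  (exists t, forall k, W k t) ->
  exists x, forall k, psi (W k) x /\
    forall A, open tX A -> (forall t, W k t -> phi A t) -> A x.

Lemma shadow_legal_step U m :
  legal_move tX U (2 * m + 2) ->
  U (2 * m + 1) = transferred_strategy (history U (2 * m + 1)) ->
  (forall k, k <= 2 * m -> legal_move tY (shadow U) k) ->
  legal_move tY (shadow U) (2 * m + 1) /\ legal_move tY (shadow U) (2 * m + 2).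
Proof.
  intros [Uo [Une Usub]] HU HW.
  assert (W1 := legal_reply s_wins HW (shadow_follows U _)).
  split; [exact W1|].
  unfold legal_move; rewrite shadow_even.
  split; [apply open_inter; [apply phi_open, Uo|apply W1]|split].
  - apply phi_meets; [exact Uo|apply W1|exact Une|].
    intros x Ux; specialize (Usub x ltac:(lia) Ux).
    replace (2 * m + 2 - 1) with (2 * m + 1) in Usub by lia.
    rewrite HU in Usub; apply transferred_strategy_history in Usub; apply Usub.
  - intros t _ [_ Wt]; replace (2 * m + 2 - 1) with (2 * m + 1) by lia; exact Wt.
Qed.

Lemma shadow_legal U n :
  (forall k, k <= 2 * n -> legal_move tX U k) ->
  follows_upto transferred_strategy U (2 * n + 1) ->
  forall m, m <= n ->
    (forall k, k <= 2 * m -> legal_move tY (shadow U) k) /\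
    (forall t, shadow U (2 * m) t -> phi (U (2 * m)) t).
Proof.
  intros HU Hf m; induction m as [|m IHm]; intros Hm.
  - destruct (HU 0 (Nat.le_0_l _)) as [U0o [U0ne _]].
    split; [|intros t; rewrite shadow_0; auto].
    intros k Hk; replace k with 0 by lia; unfold legal_move; rewrite shadow_0.
    split; [auto|split; [auto|intros; lia]].
  - destruct IHm as [HW _]; [lia|].
    destruct (shadow_legal_step U m) as [W1 W2]; auto.
    + apply HU; lia.
    + apply Hf; lia.
    + replace (2 * S m) with (2 * m + 2) by lia; rewrite shadow_even.
      split; [|intros t [Ht _]; exact Ht].
      intros k Hk; assert (k <= 2 * m \/ k = 2 * m + 1 \/ k = 2 * m + 2)
        as [Hk'|[->| ->]] by lia; auto.
Qed.

Lemma transferred_strategy_winning : winning_N tX transferred_strategy.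
Proof.
  split.
  - intros U n HU Hf; simpl.
    destruct (shadow_legal U n HU Hf n (le_n _)) as [HW HWU].
    destruct (legal_reply s_wins HW (shadow_follows U _)) as [Wo [Wne Wsub]].
    destruct (HU (2 * n) (le_n _)) as [Uo _].
    destruct (psi_open_meets (U (2 * n)) (shadow U (2 * n + 1)) Uo Wo Wne)
      as [Po [x [Px Ux]]].
    { intros t Wt; apply HWU; specialize (Wsub t ltac:(lia) Wt).
      replace (2 * n + 1 - 1) with (2 * n) in Wsub by lia; exact Wsub. }
    split; [|split].
    + eapply open_ext; [intros z; symmetry; apply transferred_strategy_history|].
      apply open_inter; auto.
    + exists x; apply transferred_strategy_history; auto.
    + intros z Hz; apply transferred_strategy_history in Hz; apply Hz.
  - intros U HU Hf.
    assert (Hleg : forall m, (forall k, k <= 2 * m -> legal_move tY (shadow U) k) /\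
                             (forall t, shadow U (2 * m) t -> phi (U (2 * m)) t)).
    { intros m; apply (shadow_legal U m); [auto|intros n _; apply Hf|lia]. }
    assert (HW : forall k, legal_move tY (shadow U) k)
      by (intros k; apply (Hleg k); lia).
    destruct (proj2 s_wins (shadow U) HW) as [t Ht].
    { intros n; apply (shadow_follows U (2 * n + 2)); lia. }
    destruct (psi_Gdelta (shadow U) (fun k => proj1 (HW k))) as [x Hx]; [eauto|].
    assert (Ueven : forall m, U (2 * m) x).
    { intros m; apply (proj2 (Hx (2 * m))); [apply HU|apply Hleg]. }
    exists x; intros k; destruct (Nat.Even_or_Odd k) as [[m ->]|[m ->]]; auto.
    rewrite Hf; apply transferred_strategy_history; split; [apply Hx|apply Ueven].
Qed.

End StrategyTransfer.

Arguments transferred_strategy {X Y} phi psi s.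
Arguments transferred_strategy_winning {X Y} tX tY {phi psi s}.

Section DenseEmbedding.
Variables (X Y : Type) (tX : Topology X) (tY : Topology Y) (j : X -> Y).
Hypothesis j_continuous : forall B, open tY B -> open tX (fun x => B (j x)).
Hypothesis j_embedding : forall A, open tX A -> exists B, open tY B /\ forall x, A x <-> B (j x).
Hypothesis j_dense : forall B, open tY B -> (exists y, B y) -> exists x, B (j x).

Definition extension (A : set X) : set Y :=
  fun u => exists B, open tY B /\ B u /\ forall x, B (j x) -> A x.

Lemma open_extension A : open tY (extension A).
Proof.
  apply open_ext with (fun u => exists B, (open tY B /\ forall x, B (j x) -> A x) /\ B u).
  - intros u; split.
    + intros [B [[HB HBA] Bu]]; exists B; auto.
    + intros [B [HB [Bu HBA]]]; exists B; auto.
  - apply open_union; intros B [HB _]; exact HB.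
Qed.

Lemma extension_trace A x : extension A (j x) -> A x.
Proof. intros [B [_ [Bx HBA]]]; auto. Qed.

Lemma extension_of_open A x : open tX A -> A x -> extension A (j x).
Proof.
  intros HA Ax; destruct (j_embedding A HA) as [B [HB HAB]].
  exists B; split; [exact HB|split; [apply HAB; exact Ax|]].
  intros z Bz; apply HAB; exact Bz.
Qed.

Lemma choquet_of_dense_embedding : choquet tX -> choquet tY.
Proof.
  intros [s Hs]; exists (transferred_strategy (fun A x => A (j x)) extension s).
  apply (transferred_strategy_winning tY tX); auto.
  - intros A V HA _ Ane HAV; destruct (j_dense A HA Ane) as [x Ax].
    exists x; split; [exact Ax|apply extension_trace, HAV, Ax].
  - intros A V _ HV [t Vt] HVA; split; [apply open_extension|].
    exists (j t); split; [apply extension_of_open|apply HVA]; auto.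
  - intros W HW [t Ht]; exists (j t); intros k; split; [apply extension_of_open; auto|].
    intros A _ HWA; apply HWA, Ht.
Qed.

Lemma choquet_of_Gdelta_dense :
  choquet tY -> Gdelta_dense tY (fun y => exists x, j x = y) -> choquet tX.
Proof.
  intros [s Hs] HG; exists (transferred_strategy extension (fun W x => W (j x)) s).
  apply (transferred_strategy_winning tX tY); auto.
  - intros A _; apply open_extension.
  - intros A HA [x Ax]; exists (j x); apply extension_of_open; auto.
  - intros A V HA _ [x Ax] HAV; exists (j x); split; [apply extension_of_open|apply HAV]; auto.
  - intros A V _ HV Vne HVA; split; [apply j_continuous, HV|].
    destruct (j_dense V HV Vne) as [x Vx].
    exists x; split; [exact Vx|apply extension_trace, HVA, Vx].
  - intros W HW Wne; destruct (HG W HW Wne) as [y [[x <-] Hx]].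
    exists x; intros k; split; [apply Hx|].
    intros A _ HWA; apply extension_trace, HWA, Hx.
Qed.

End DenseEmbedding.

Arguments extension {X Y} tY j A.
Arguments choquet_of_dense_embedding {X Y tX tY j}.
Arguments choquet_of_Gdelta_dense {X Y tX tY j}.
Arguments open_extension {X Y} tY j A.
Arguments extension_trace {X Y tY j A x}.
Arguments extension_of_open {X Y tX tY j} j_embedding {A x}.

(* The invariant keeps open sets
   P, Q of Y with y ∈ P·Q whose traces on X lie below the two plays; in round n,
   P is cut down to points T_n-close on the right to a fixed c ∈ P, and Q to points
   T_n-close on the left to a fixed d ∈ Q, so that the product a·b of the points
   a, b in which the two plays end is in T_n T_n^-1 y T_n^-1 T_n. *)
Section DualPlay.
Variables (X Y : TopGroup) (j : X -> Y).
Hypothesis j_continuous :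
  forall B, open (tg_top Y) B -> open (tg_top X) (fun x => B (j x)).
Hypothesis j_embedding :
  forall A, open (tg_top X) A -> exists B, open (tg_top Y) B /\ forall x, A x <-> B (j x).
Hypothesis j_dense : forall B, open (tg_top Y) B -> (exists u, B u) -> exists x, B (j x).
Variable s : strategy X.
Hypothesis s_wins : winning_N (tg_top X) s.
Variables (y : Y) (T : nat -> set Y).
Hypothesis T_open : forall n, open (tg_top Y) (T n).
Hypothesis T_one : forall n, T n tg_one.

Local Notation ext := (extension (tg_top Y) j).

Record dual_state := DualState {
  histA : list (set X); histB : list (set X); regionP : set Y; regionQ : set Y }.

Definition pivotP (st : dual_state) : Y :=
  epsilon (inhabits y) (fun c => regionP st c /\ regionQ st (c^-1 ⋅ y)).

Definition P1 n st : set Y := fun u =>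
  regionP st u /\ regionQ st (u^-1 ⋅ y) /\ T n (u ⋅ (pivotP st)^-1).

Definition moveA n st : set X := fun x => P1 n st (j x).

Definition replyA n st : set X := s (histA st ++ [moveA n st]).

Definition P2 n st : set Y := fun u => ext (replyA n st) u /\ P1 n st u.

Definition pivotQ n st : Y :=
  epsilon (inhabits y) (fun d => regionQ st d /\ P2 n st (y ⋅ d^-1)).

Definition Q1 n st : set Y := fun u =>
  regionQ st u /\ P2 n st (y ⋅ u^-1) /\ T n ((pivotQ n st)^-1 ⋅ u).

Definition moveB n st : set X := fun x => Q1 n st (j x).

Definition replyB n st : set X := s (histB st ++ [moveB n st]).

Definition Q2 n st : set Y := fun u => ext (replyB n st) u /\ Q1 n st u.

Definition next_state n st : dual_state :=
  DualState (histA st ++ [moveA n st; replyA n st]) (histB st ++ [moveB n st; replyB n st])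
            (P2 n st) (Q2 n st).

Fixpoint state (n : nat) : dual_state :=
  match n with
  | 0 => DualState [] [] setT setT
  | S n' => next_state n' (state n')
  end.

Definition playA : nat -> set X := limit_seq setT (fun n => histA (state n)).
Definition playB : nat -> set X := limit_seq setT (fun n => histB (state n)).

Lemma length_state n : length (histA (state n)) = 2 * n /\ length (histB (state n)) = 2 * n.
Proof.
  induction n as [|n [IHA IHB]]; [split; reflexivity|].
  simpl; rewrite !length_app, IHA, IHB; simpl; lia.
Qed.

Lemma histA_grows n : exists r, histA (state (S n)) = histA (state n) ++ r.
Proof. eexists; reflexivity. Qed.

Lemma histB_grows n : exists r, histB (state (S n)) = histB (state n) ++ r.
Proof. eexists; reflexivity. Qed.

Lemma histA_long n : n <= length (histA (state n)).
Proof. rewrite (proj1 (length_state n)); lia. Qed.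

Lemma histB_long n : n <= length (histB (state n)).
Proof. rewrite (proj2 (length_state n)); lia. Qed.

Lemma plays_round n :
  playA (2 * n) = moveA n (state n) /\ playA (2 * n + 1) = replyA n (state n) /\
  playB (2 * n) = moveB n (state n) /\ playB (2 * n + 1) = replyB n (state n).
Proof.
  destruct (length_state n) as [LA LB]; destruct (length_state (S n)) as [LA' LB'].
  unfold playA, playB.
  rewrite <- !(nth_limit_seq histA_grows histA_long (S n)),
          <- !(nth_limit_seq histB_grows histB_long (S n)) by lia.
  cbn [state next_state histA histB]; rewrite !app_nth2, LA, LB by lia.
  replace (2 * n - 2 * n) with 0 by lia; replace (2 * n + 1 - 2 * n) with 1 by lia.
  repeat split.
Qed.

Lemma plays_history n :
  history playA (2 * n + 1) = histA (state n) ++ [moveA n (state n)] /\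
  history playB (2 * n + 1) = histB (state n) ++ [moveB n (state n)].
Proof.
  destruct (length_state n) as [LA LB]; destruct (length_state (S n)) as [LA' LB'].
  unfold history, playA, playB.
  rewrite (map_limit_seq histA_grows histA_long (S n)),
          (map_limit_seq histB_grows histB_long (S n)) by lia.
  cbn [state next_state histA histB]; rewrite <- LA at 1; rewrite <- LB at 1; rewrite !firstn_app_2; split; reflexivity.
Qed.

Lemma plays_follow m : follows_upto s playA m /\ follows_upto s playB m.
Proof.
  split; intros n _; destruct (plays_round n) as [_ [HA [_ HB]]];
    destruct (plays_history n) as [EA EB]; [rewrite HA, EA|rewrite HB, EB]; reflexivity.
Qed.

Definition invariant (n : nat) : Prop :=
  let st := state n in
  open (tg_top Y) (regionP st) /\ open (tg_top Y) (regionQ st) /\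
  (exists c, regionP st c /\ regionQ st (c^-1 ⋅ y)) /\
  (forall x k, k < 2 * n -> regionP st (j x) -> playA k x) /\
  (forall x k, k < 2 * n -> regionQ st (j x) -> playB k x) /\
  (forall k, k < 2 * n -> legal_move (tg_top X) playA k /\ legal_move (tg_top X) playB k).

Lemma open_P1 n st :
  open (tg_top Y) (regionP st) -> open (tg_top Y) (regionQ st) -> open (tg_top Y) (P1 n st).
Proof.
  intros Po Qo; apply open_inter; [exact Po|apply open_inter].
  - apply (tg_inv_cont Y (fun v => regionQ st (v ⋅ y))), open_mulr, Qo.
  - apply open_mulr, T_open.
Qed.

Lemma P1_pivot n st :
  (exists c, regionP st c /\ regionQ st (c^-1 ⋅ y)) -> P1 n st (pivotP st).
Proof.
  intros Hc; destruct (epsilon_spec (inhabits y) _ Hc) as [Pc Qc].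
  split; [exact Pc|split; [exact Qc|]]; rewrite mulgV; apply T_one.
Qed.

Lemma open_P2 n st :
  open (tg_top Y) (regionP st) -> open (tg_top Y) (regionQ st) -> open (tg_top Y) (P2 n st).
Proof. intros Po Qo; apply open_inter; [apply open_extension|apply open_P1; auto]. Qed.

Lemma open_Q1 n st :
  open (tg_top Y) (regionQ st) -> open (tg_top Y) (P2 n st) -> open (tg_top Y) (Q1 n st).
Proof.
  intros Qo P2o; apply open_inter; [exact Qo|apply open_inter].
  - apply (tg_inv_cont Y (fun v => P2 n st (y ⋅ v))), open_mull, P2o.
  - apply open_mull, T_open.
Qed.

Lemma Q1_pivot n st :
  (exists d, regionQ st d /\ P2 n st (y ⋅ d^-1)) -> Q1 n st (pivotQ n st).
Proof.
  intros Hd; destruct (epsilon_spec (inhabits y) _ Hd) as [Qd Pd].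
  split; [exact Qd|split; [exact Pd|]]; rewrite tg_mulV; apply T_one.
Qed.

Lemma round_A n : invariant n ->
  legal_move (tg_top X) playA (2 * n) /\ legal_move (tg_top X) playA (2 * n + 1) /\
  exists d, regionQ (state n) d /\ P2 n (state n) (y ⋅ d^-1).
Proof.
  intros (Po & Qo & Hc & HPA & _ & Hleg).
  destruct (plays_round n) as (EA0 & EA1 & _).
  assert (LA0 : legal_move (tg_top X) playA (2 * n)).
  { unfold legal_move; rewrite EA0; split; [apply j_continuous, open_P1; auto|split].
    - apply j_dense; [apply open_P1; auto|exists (pivotP (state n)); apply P1_pivot, Hc].
    - intros x Hn [Px _]; apply HPA; [lia|exact Px]. }
  assert (LA1 : legal_move (tg_top X) playA (2 * n + 1)).
  { apply (legal_reply s_wins); [|apply plays_follow].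
    intros k Hk; assert (k < 2 * n \/ k = 2 * n) as [Hk'| ->] by lia; auto.
    apply Hleg, Hk'. }
  split; [exact LA0|split; [exact LA1|]].
  destruct LA1 as [Ao [[x Ax] Asub]].
  assert (Hx : P1 n (state n) (j x)).
  { specialize (Asub x ltac:(lia) Ax); replace (2 * n + 1 - 1) with (2 * n) in Asub by lia.
    rewrite EA0 in Asub; exact Asub. }
  rewrite EA1 in Ao, Ax.
  exists ((j x)^-1 ⋅ y); split; [apply Hx|].
  rewrite mulgVinvK; split; [apply (extension_of_open j_embedding); auto|exact Hx].
Qed.

Lemma round_B n : invariant n ->
  (exists d, regionQ (state n) d /\ P2 n (state n) (y ⋅ d^-1)) ->
  legal_move (tg_top X) playB (2 * n) /\ legal_move (tg_top X) playB (2 * n + 1) /\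
  exists c, P2 n (state n) c /\ Q2 n (state n) (c^-1 ⋅ y).
Proof.
  intros (Po & Qo & _ & _ & HQB & Hleg) Hd.
  destruct (plays_round n) as (_ & _ & EB0 & EB1).
  assert (Q1o : open (tg_top Y) (Q1 n (state n))) by (apply open_Q1, open_P2; auto).
  assert (LB0 : legal_move (tg_top X) playB (2 * n)).
  { unfold legal_move; rewrite EB0; split; [apply j_continuous, Q1o|split].
    - apply j_dense; [exact Q1o|exists (pivotQ n (state n)); apply Q1_pivot, Hd].
    - intros x Hn [Qx _]; apply HQB; [lia|exact Qx]. }
  assert (LB1 : legal_move (tg_top X) playB (2 * n + 1)).
  { apply (legal_reply s_wins); [|apply plays_follow].
    intros k Hk; assert (k < 2 * n \/ k = 2 * n) as [Hk'| ->] by lia; auto.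
    apply Hleg, Hk'. }
  split; [exact LB0|split; [exact LB1|]].
  destruct LB1 as [Bo [[z Bz] Bsub]].
  assert (Hz : Q1 n (state n) (j z)).
  { specialize (Bsub z ltac:(lia) Bz); replace (2 * n + 1 - 1) with (2 * n) in Bsub by lia.
    rewrite EB0 in Bsub; exact Bsub. }
  rewrite EB1 in Bo, Bz.
  exists (y ⋅ (j z)^-1); split; [apply Hz|].
  rewrite invmulgVK; split; [apply (extension_of_open j_embedding); auto|exact Hz].
Qed.

Lemma invariant_S n : invariant n -> invariant (S n).
Proof.
  intros Hinv; pose proof Hinv as (Po & Qo & _ & HPA & HQB & Hleg).
  destruct (round_A n Hinv) as (LA0 & LA1 & Hd).
  destruct (round_B n Hinv Hd) as (LB0 & LB1 & Hc).
  destruct (plays_round n) as (EA0 & EA1 & EB0 & EB1).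
  assert (P2o : open (tg_top Y) (P2 n (state n))) by (apply open_P2; auto).
  unfold invariant; cbn [state next_state regionP regionQ].
  split; [exact P2o|split; [apply open_inter; [apply open_extension|apply open_Q1; auto]|]].
  split; [exact Hc|split; [|split]].
  - intros x k Hk [Hext HP1].
    assert (k < 2 * n \/ k = 2 * n \/ k = 2 * n + 1) as [Hk'|[->| ->]] by lia.
    + apply HPA; [exact Hk'|apply HP1].
    + rewrite EA0; exact HP1.
    + rewrite EA1; apply (extension_trace Hext).
  - intros x k Hk [Hext HQ1].
    assert (k < 2 * n \/ k = 2 * n \/ k = 2 * n + 1) as [Hk'|[->| ->]] by lia.
    + apply HQB; [exact Hk'|apply HQ1].
    + rewrite EB0; exact HQ1.
    + rewrite EB1; apply (extension_trace Hext).
  - intros k Hk; assert (k < 2 * n \/ k = 2 * n \/ k = 2 * n + 1) as [Hk'|[->| ->]] by lia;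
      auto.
Qed.

Lemma invariant_all n : invariant n.
Proof.
  induction n as [|n IHn]; [|apply invariant_S, IHn].
  unfold invariant; cbn [state regionP regionQ].
  split; [apply open_full|split; [apply open_full|split; [exists y; split; exact I|]]].
  split; [|split]; intros; lia.
Qed.

Lemma dual_plays_product : exists a b, forall n, exists t1 t2 t3 t4,
  T n t1 /\ T n t2 /\ T n t3 /\ T n t4 /\ j a ⋅ j b = (t1 ⋅ t2^-1) ⋅ y ⋅ (t3^-1 ⋅ t4).
Proof.
  assert (Hleg : forall k, legal_move (tg_top X) playA k /\ legal_move (tg_top X) playB k)
    by (intros k; apply (invariant_all (S k)); lia).
  destruct (proj2 s_wins playA (fun k => proj1 (Hleg k))) as [a Ha].
  { intros n; apply (plays_follow (2 * n + 2)); lia. }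
  destruct (proj2 s_wins playB (fun k => proj2 (Hleg k))) as [b Hb].
  { intros n; apply (plays_follow (2 * n + 2)); lia. }
  exists a, b; intros n.
  destruct (invariant_all (S n)) as (_ & _ & [u [Pu Qu]] & _).
  cbn [state next_state regionP regionQ] in Pu, Qu.
  destruct (plays_round n) as (EA0 & _ & EB0 & _).
  specialize (Ha (2 * n)); specialize (Hb (2 * n)); rewrite EA0 in Ha; rewrite EB0 in Hb.
  exists (j a ⋅ (pivotP (state n))^-1), (u ⋅ (pivotP (state n))^-1),
         ((pivotQ n (state n))^-1 ⋅ (u^-1 ⋅ y)), ((pivotQ n (state n))^-1 ⋅ j b).
  split; [apply Ha|split; [apply Pu|split; [apply Qu|split; [apply Hb|]]]].
  symmetry; apply sandwich_cancel.
Qed.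

End DualPlay.

Arguments dual_plays_product {X Y j} j_continuous j_embedding j_dense {s} s_wins y {T}.

Lemma Gdelta_dense_of_choquet {X Y : TopGroup} {j : X -> Y} :
  (forall a b, j (a ⋅ b) = j a ⋅ j b) ->
  (forall B, open (tg_top Y) B -> open (tg_top X) (fun x => B (j x))) ->
  (forall A, open (tg_top X) A -> exists B, open (tg_top Y) B /\ forall x, A x <-> B (j x)) ->
  (forall B, open (tg_top Y) B -> (exists u, B u) -> exists x, B (j x)) ->
  choquet (tg_top X) -> Gdelta_dense (tg_top Y) (fun y => exists x, j x = y).
Proof.
  intros j_morph j_continuous j_embedding j_dense [s s_wins] V HV [y Hy].
  destruct (choice (fun n T => open (tg_top Y) T /\ T tg_one /\
              forall t1 t2 t3 t4, T t1 -> T t2 -> T t3 -> T t4 ->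
                V n ((t1 ⋅ t2^-1) ⋅ y ⋅ (t3^-1 ⋅ t4)))) as [T HT].
  { intros n; apply nbhd1_sandwich; auto. }
  destruct (dual_plays_product j_continuous j_embedding j_dense s_wins y
              (fun n => proj1 (HT n)) (fun n => proj1 (proj2 (HT n)))) as [a [b Hab]].
  exists (j (a ⋅ b)); split; [eauto|]; intros n; rewrite j_morph.
  destruct (Hab n) as (t1 & t2 & t3 & t4 & H1 & H2 & H3 & H4 & ->).
  apply (HT n); auto.
Qed.

Theorem theorem4 (X Y : TopGroup) (j : X -> Y) (Hj : is_raikov_completion X Y j) :
  choquet (tg_top X) <->
  (choquet (tg_top Y) /\ Gdelta_dense (tg_top Y) (fun y => exists x, j x = y)).
Proof.
  destruct Hj as (j_morph & _ & j_continuous & j_embedding & j_dense & _).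
  split.
  - intros HX; split.
    + exact (choquet_of_dense_embedding j_continuous j_embedding j_dense HX).
    + exact (Gdelta_dense_of_choquet j_morph j_continuous j_embedding j_dense HX).
  - intros [HY HG]; exact (choquet_of_Gdelta_dense j_continuous j_embedding j_dense HY HG).
Qed.
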